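(* For every $n\ge 1$, $|\mathcal{OCT}_n|=(n+1)2^{n-2}$.
   Context: $X_n=\{1,2,\dots,n\}$ with its usual order. A map $\alpha:X_n\to X_n$ is order-preserving if $x\le y$ implies $x\alpha\le y\alpha$, and a contraction if $|x\alpha-y\alpha|\le|x-y|$ for all $x,y$. $\mathcal{OCT}_n$ is the set (semigroup under composition) of all order-preserving contractions $X_n\to X_n$ defined on all of $X_n$. *)

From mathcomp Require Import all_boot.
Set Implicit Arguments. Unset Strict Implicit. Unset Printing Implicit Defensive.

(* X_n = {1,...,n} is modelled by 'I_n = {0,...,n-1} (shift by one, which
   preserves order and distances). Full transformations X_n -> X_n are
   finite functions {ffun 'I_n -> 'I_n}. *)

Definition order_preserving n (a : {ffun 'I_n -> 'I_n}) : bool :=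
  [forall x : 'I_n, forall y : 'I_n, (x <= y) ==> (a x <= a y)].

Definition natdist (m k : nat) : nat := (m - k) + (k - m).

Definition contraction n (a : {ffun 'I_n -> 'I_n}) : bool :=
  [forall x : 'I_n, forall y : 'I_n, natdist (a x) (a y) <= natdist x y].

Definition OCT n : {set {ffun 'I_n -> 'I_n}} :=
  [set a | order_preserving a && contraction a].

From mathcomp Require Import all_boot zify.
Set Implicit Arguments. Unset Strict Implicit. Unset Printing Implicit Defensive.

(* Write n = m + 1 and view a map a : 'I_n -> 'I_n as the
   sequence a(0), ..., a(m).  It is an order-preserving contraction exactly
   when every step a(k+1) - a(k) is 0 or 1 (the local condition implies the
   global one by summing steps).  Such a staircase is determined by its start
   s = a(0) and its set D of ascent positions in 'I_m, and conversely a pair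
   (s, D) describes a staircase staying below m iff s + |D| <= m.  Hence
     |OCT n| = #{(s, D) | s + |D| <= m} = sum_{D subset 'I_m} (m + 1 - |D|).
   Pairing each D with its complement, the two summands add up to m + 2, so
   twice the sum is (m + 2) 2^m, which gives 4 |OCT n| = (n + 1) 2^n. *)

Definition unit_steps (f : nat -> nat) (m : nat) : Prop :=
  forall k, k < m -> f k <= f k.+1 <= (f k).+1.

Lemma unit_steps_bound f m : unit_steps f m ->
  forall x y, x <= y <= m -> f x <= f y <= f x + (y - x).
Proof.
move=> steps x y /andP [le_xy le_ym].
have drift d : x + d <= m -> f x <= f (x + d) <= f x + d.
  elim: d => [|d IH] le_m; first by rewrite !addn0 leqnn.
  have := IH (ltnW _); have := steps (x + d); rewrite addnS; lia.
by have := drift (y - x); rewrite subnKC //; apply; lia.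
Qed.

Lemma card_ord_lt n j : j <= n -> #|[set i : 'I_n | i < j]| = j.
Proof.
move=> le_jn; rewrite -sum1_card.
rewrite (eq_bigl (fun i : 'I_n => i < j)) => [|i]; last by rewrite inE.
by rewrite -(big_ord_widen n (fun _ => 1)) // sum1_card card_ord.
Qed.

(* Summing over the 2^t subsets D of a t-element type, pairing D with its
   complement: (t + 1 - |D|) + (t + 1 - |~D|) = t + 2. *)
Lemma sum_complement_sets (T : finType) :
  2 * \sum_(D : {set T}) (#|T|.+1 - #|D|) = (#|T| + 2) * 2 ^ #|T|.
Proof.
rewrite mul2n -addnn {2}(reindex_inj (@setC_inj T)) -big_split /=.
set t := #|T|.
rewrite (eq_bigr (fun _ => t + 2)) => [|D _]; last first.
  by have : #|D| + #|~: D| = t := cardsC D; lia.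
by rewrite sum_nat_const -cardsT -powersetT card_powerset cardsT mulnC.
Qed.

Section Staircases.
Variable m : nat.

Definition valseq (a : {ffun 'I_m.+1 -> 'I_m.+1}) (k : nat) : nat := a (inord k).

Lemma valseqE a (x : 'I_m.+1) : valseq a x = a x.
Proof. by rewrite /valseq inord_val. Qed.

Lemma oct_unit_steps a : a \in OCT m.+1 <-> unit_steps (valseq a) m.
Proof.
rewrite inE; split.
- move=> /andP [/forallP mono /forallP contr] k lt_km.
  have := mono (inord k) => /forallP /(_ (inord k.+1)) /implyP.
  have := contr (inord k) => /forallP /(_ (inord k.+1)).
  rewrite /valseq /natdist (inordK (ltnW lt_km)) (inordK (lt_km : k.+1 < m.+1)).
  by move=> ? /(_ (leqnSn k)); lia.
- move=> steps; apply/andP; split; apply/forallP => x; apply/forallP => y;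
    have := @unit_steps_bound _ _ steps x y;
    have := @unit_steps_bound _ _ steps y x;
    have := ltn_ord x; have := ltn_ord y; rewrite /natdist -!valseqE.
  + by move=> *; apply/implyP; lia.
  + lia.
Qed.

Definition below (D : {set 'I_m}) (k : nat) : nat := #|[set i in D | i < k]|.

Lemma below0 D : below D 0 = 0.
Proof.
by rewrite /below (eq_card0 (A := [set i in D | i < 0])) // => i; rewrite !inE andbF.
Qed.

Lemma below_all D : below D m = #|D|.
Proof. by apply: eq_card => i; rewrite !inE ltn_ord andbT. Qed.

Lemma belowS D (i : 'I_m) : below D i.+1 = below D i + (i \in D).
Proof.
rewrite /below (cardsD1 i) !inE ltnSn andbT addnC.
congr (_ + _); apply: eq_card => j; rewrite !inE ltnS [in RHS]ltn_neqAle.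
by case: (j \in D); rewrite ?andbF.
Qed.

Lemma below_le D k : below D k <= #|D|.
Proof. by apply: subset_leq_card; apply/subsetP => i; rewrite inE => /andP []. Qed.

(* Admissible (start, ascent set) pairs: the staircase never exceeds m. *)
Definition codes : {set 'I_m.+1 * {set 'I_m}} :=
  [set p : 'I_m.+1 * {set 'I_m} | p.1 + #|p.2| <= m].

Definition staircase (p : 'I_m.+1 * {set 'I_m}) : {ffun 'I_m.+1 -> 'I_m.+1} :=
  [ffun x : 'I_m.+1 => inord (p.1 + below p.2 x)].

Definition ascents (a : {ffun 'I_m.+1 -> 'I_m.+1}) : {set 'I_m} :=
  [set i : 'I_m | valseq a i.+1 == (valseq a i).+1].

Definition code (a : {ffun 'I_m.+1 -> 'I_m.+1}) : 'I_m.+1 * {set 'I_m} :=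
  (a ord0, ascents a).

Lemma staircase_val p k : p \in codes -> k <= m ->
  valseq (staircase p) k = p.1 + below p.2 k.
Proof.
rewrite inE => fits le_km; rewrite /valseq ffunE (inordK (_ : k < m.+1)) //.
by rewrite inordK // ltnS (leq_trans _ fits) // leq_add2l below_le.
Qed.

Lemma staircase_oct p : p \in codes -> staircase p \in OCT m.+1.
Proof.
move=> fits; apply/oct_unit_steps => k lt_km.
have := belowS p.2 (Ordinal lt_km) => /= step.
rewrite !staircase_val // ?step; last exact: ltnW.
by case: (_ \in _) => /=; lia.
Qed.

Lemma staircaseK : {in codes, cancel staircase code}.
Proof.
move=> [s D] fits; congr (_, _).
  by apply: val_inj; rewrite /= -valseqE staircase_val // below0 addn0.
apply/setP => i; rewrite inE !staircase_val ?ltn_ord ?(ltnW (ltn_ord i)) //.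
by rewrite belowS; case: (i \in D); lia.
Qed.

(* ... and every order-preserving contraction is the staircase of its code,
   since a(k) = a(0) + (number of ascents before k). *)
Lemma codeK a : a \in OCT m.+1 -> code a \in codes /\ staircase (code a) = a.
Proof.
move=> /oct_unit_steps steps.
have profile k : k <= m -> valseq a k = a ord0 + below (ascents a) k.
  elim: k => [_|k IH lt_km]; first by rewrite below0 addn0 -valseqE.
  have := belowS (ascents a) (Ordinal lt_km); rewrite inE /= => ->.
  have := steps k lt_km; have := IH (ltnW lt_km).
  by case: (valseq a k.+1 =P (valseq a k).+1) => /=; lia.
have fits : code a \in codes.
  by rewrite inE /= -below_all -ltnS -profile //; apply: ltn_ord.
split=> //; apply/ffunP => x; apply: ord_inj.
have le_xm : x <= m := ltn_ord x.
by rewrite -!valseqE staircase_val // profile.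
Qed.

Lemma card_oct_codes : #|OCT m.+1| = #|codes|.
Proof.
have -> : OCT m.+1 = staircase @: codes.
  apply/setP => a; apply/idP/imsetP => [oct_a | [p fits ->]].
    by have [fits <-] := codeK oct_a; exists (code a).
  exact: staircase_oct.
by apply: card_in_imset; apply: can_in_inj staircaseK.
Qed.

(* For a fixed ascent set D there are m + 1 - |D| admissible starts. *)
Lemma card_codes : #|codes| = \sum_(D : {set 'I_m}) (m.+1 - #|D|).
Proof.
rewrite -sum1_card big_mkcond /=.
transitivity
  (\sum_(s : 'I_m.+1) \sum_(D : {set 'I_m}) (if (s, D) \in codes then 1 else 0)).
  by rewrite pair_bigA; apply: eq_bigr => -[].
rewrite exchange_big; apply: eq_bigr => D _.
rewrite -big_mkcond /= -(@card_ord_lt m.+1 (m.+1 - #|D|)) ?leq_subr // -sum1_card.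
by apply: eq_bigl => s; rewrite !inE /=; lia.
Qed.

End Staircases.

Theorem corollary2p10 (n : nat) (hn : 1 <= n) :
  4 * #|OCT n| = (n + 1) * 2 ^ n.
Proof.
case: n hn => [//|m] _.
have := sum_complement_sets 'I_m; rewrite card_ord => halves.
rewrite card_oct_codes card_codes expnS; nia.
Qed.
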